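(* Let $q$ be a prime power and $h,m\ge1$. Suppose that every pair $(f,g)$ of invertible $\mathbb F_q$-linearised polynomials over $\mathbb F_{q^h}$ satisfying property $(Prop_m)$ consists of monomials. Then every $\mathbb F_q$-linear $(n,q^{3h},n-2)_{q^h}$ code $C$ over $\mathbb F_{q^h}$ with $n\ge 3+m$ which has at least three coordinates from which the projections are $\mathbb F_q$-equivalent to linear codes is itself $\mathbb F_q$-equivalent to a linear code.
   Context: An $\mathbb F_q$-linearised polynomial over $\mathbb F_{q^h}$ is $\sum_{l=0}^{h-1}a_lX^{q^l}$ with $a_l\in\mathbb F_{q^h}$, viewed as a map of $\mathbb F_{q^h}$; invertible means bijective; a monomial is one with exactly one nonzero coefficient. Identities $\equiv$ between such polynomials mean equality as maps. Property $(Prop_m)$: $(f,g)$ satisfies it if there exist triples $(a_j,b_j,c_j)\in(\mathbb F_{q^h}^* )^3$, $1\le j\le m$, with $(a_1,b_1,c_1)=(1,1,1)$, such that $a_jf(b_jf^{-1}(X))\equiv g(c_jg^{-1}(X))$ for every $j$, and for all $i\ne j$: $a_i\ne a_j$, $b_i\ne b_j$, $c_i\ne c_j$. An $\mathbb F_q$-linear code over $\mathbb F_{q^h}$ is an $\mathbb F_q$-subspace of $\mathbb F_{q^h}^n$; an $(n,M,d)_{q^h}$ code has $M$ codewords and minimum distance $d$; linear means $\mathbb F_{q^h}$-linear. Two $\mathbb F_q$-linear codes are $\mathbb F_q$-equivalent if one is obtained from the other by permuting coordinates and applying in each coordinate an $\mathbb F_q$-linear bijection of $\mathbb F_{q^h}$.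 The projection of $C$ from position $i$ is $\{(x_1,\dots,x_{i-1},x_{i+1},\dots,x_n):(x_1,\dots,x_{i-1},0,x_{i+1},\dots,x_n)\in C\}$. *)

From HB Require Import structures.
From mathcomp Require Import all_boot all_order all_algebra all_fingroup.
Set Implicit Arguments. Unset Strict Implicit. Unset Printing Implicit Defensive.
Import GRing.Theory.
Local Open Scope ring_scope.

Section Defs.
Variable L : finFieldType.   (* plays the role of F_{q^h} *)
Variable q : nat.

(* the subfield F_q of L = roots of X^q - X *)
Definition inFq (x : L) : bool := x ^+ q == x.

Definition Fq_linear (phi : L -> L) : Prop :=
  (forall x y, phi (x + y) = phi x + phi y) /\
  (forall c x, inFq c -> phi (c * x) = c * phi x).

Definition linpoly (h : nat) (a : 'I_h -> L) : L -> L :=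
  fun x => \sum_(l < h) a l * x ^+ (q ^ l)%N.

Definition lp_invertible (h : nat) (a : 'I_h -> L) : Prop := bijective (linpoly a).

Definition lp_monomial (h : nat) (a : 'I_h -> L) : Prop :=
  #|[set l | a l != 0]| = 1%N.

(* property (Prop_m); inverses are the inverse maps (finv) of the bijections *)
Definition Prop_m (h m : nat) (f g : 'I_h -> L) : Prop :=
  exists A B C : 'I_m -> L,
    [/\ (forall j, [/\ A j != 0, B j != 0 & C j != 0]),
        (forall j : 'I_m, val j = 0%N -> [/\ A j = 1, B j = 1 & C j = 1]),
        (forall j x, A j * linpoly f (B j * finv (linpoly f) x)
                     = linpoly g (C j * finv (linpoly g) x)) &
        [/\ injective A, injective B & injective C]].

Definition Fq_code (n : nat) (C : {set 'rV[L]_n}) : Prop :=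
  [/\ 0 \in C,
      (forall x y, x \in C -> y \in C -> x + y \in C) &
      (forall c x, inFq c -> x \in C -> c *: x \in C)].

Definition lin_code (n : nat) (C : {set 'rV[L]_n}) : Prop :=
  [/\ 0 \in C,
      (forall x y, x \in C -> y \in C -> x + y \in C) &
      (forall c x, x \in C -> c *: x \in C)].

Definition hdist (n : nat) (x y : 'rV[L]_n) : nat :=
  #|[set i : 'I_n | x ord0 i != y ord0 i]|.

Definition min_dist (n : nat) (C : {set 'rV[L]_n}) (d : nat) : Prop :=
  (exists x y, [/\ x \in C, y \in C, x != y & hdist x y = d]) /\
  (forall x y, x \in C -> y \in C -> x != y -> (d <= hdist x y)%N).

Definition Fq_equiv (n : nat) (C D : {set 'rV[L]_n}) : Prop :=
  exists (s : 'S_n) (phi : 'I_n -> L -> L),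
    (forall i, Fq_linear (phi i) /\ bijective (phi i)) /\
    D = [set \row_i phi i (x ord0 (s i)) | x : 'rV[L]_n in C].

Definition equiv_to_linear (n : nat) (C : {set 'rV[L]_n}) : Prop :=
  exists D : {set 'rV[L]_n}, lin_code D /\ Fq_equiv C D.

Definition skip (n : nat) (i : 'I_n) (j : 'I_n.-1) : 'I_n := insubd i (bump i j).

Definition proj (n : nat) (C : {set 'rV[L]_n}) (i : 'I_n) : {set 'rV[L]_n.-1} :=
  [set \row_(j < n.-1) x ord0 (skip i j) | x : 'rV[L]_n in [set x in C | x ord0 i == 0]].

End Defs.

From HB Require Import structures.
From mathcomp Require Import all_boot all_order all_algebra all_fingroup all_field.
From mathcomp Require Import ring zify.
Set Implicit Arguments. Unset Strict Implicit. Unset Printing Implicit Defensive.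
Import GRing.Theory.
Local Open Scope ring_scope.

(* Since the minimum distance is n - 2 and |C| = |L|^3, a codeword is determined by its
   values at any three positions a, b, c, and C is the direct sum of three axes, the
   codewords vanishing at two of these positions.  If the projection from i is
   F_q-equivalent to a linear code, the coordinate maps of the equivalence turn all the
   coordinates of an axis vanishing at i into scalar multiples of a single F_q-linear
   bijection.  Comparing the projections from a, b and c at the n - 3 >= m remaining
   positions yields two invertible F_q-linear maps satisfying (Prop_m), with scalars
   indexed by distinct positions.  Every F_q-linear map of L is a linearised polynomial
   (count the maps by their values on an F_q-basis), so the hypothesis makes one of them
   a monomial, hence semilinear, and using it as coordinate map at c makes the image of C
   an L-linear code. *)

(** * F_q-linear maps and linearised polynomials *)

Section FqLinearMaps.
Variables (L : finFieldType) (q : nat).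
Implicit Types (T U : L -> L) (x y lam : L).

Lemma Fq_linear0 T : Fq_linear q T -> T 0 = 0.
Proof. by case=> TD _; apply: (addIr (T 0)); rewrite -TD !add0r. Qed.

Lemma Fq_linear_eq0 T x : Fq_linear q T -> injective T -> (T x == 0) = (x == 0).
Proof. by move=> Tlin Tinj; rewrite -[in LHS](Fq_linear0 Tlin) (inj_eq Tinj). Qed.

Lemma Fq_linear_comp T U : Fq_linear q T -> Fq_linear q U -> Fq_linear q (T \o U).
Proof.
move=> [TD TZ] [UD UZ]; split=> [x y | c x cq] /=; first by rewrite UD TD.
by rewrite UZ // TZ.
Qed.

Lemma Fq_linear_can T U : Fq_linear q T -> cancel T U -> cancel U T -> Fq_linear q U.
Proof.
move=> [TD TZ] TK UK; split=> [x y | c x cq]; apply: (can_inj TK).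
  by rewrite TD !UK.
by rewrite TZ // !UK.
Qed.

Lemma Fq_linear_mull T lam : Fq_linear q T -> Fq_linear q (fun x => lam * T x).
Proof.
move=> [TD TZ]; split=> [x y | c x cq]; first by rewrite TD mulrDr.
by rewrite TZ // mulrCA.
Qed.

Lemma Fq_linear_mulr T lam : Fq_linear q T -> Fq_linear q (fun x => T (lam * x)).
Proof.
move=> [TD TZ]; split=> [x y | c x cq]; first by rewrite mulrDr TD.
by rewrite mulrCA (TZ c).
Qed.

End FqLinearMaps.

Lemma monomial_semilinear (L : finFieldType) (q h : nat) (a : 'I_h -> L) :
  lp_monomial a -> exists e : nat, forall b x, linpoly q a (b * x) = b ^+ e * linpoly q a x.
Proof.
move=> /eqP/cards1P [l0 supp_a].
have a0 l : l != l0 -> a l = 0.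
  by apply: contraNeq => al; rewrite -in_set1 -supp_a inE.
exists (q ^ l0)%N => b x; rewrite /linpoly (bigD1 l0) // [in RHS](bigD1 l0) //= !big1 ?addr0.
- by rewrite exprMn mulrCA.
- by move=> l /a0 ->; rewrite mul0r.
- by move=> l /a0 ->; rewrite mul0r.
Qed.

Lemma card_ker_im (V : finZmodType) (N : V -> V) : {morph N : x y / x + y} ->
  (#|V| <= #|[set x | N x == 0%R]| * #|[set N x | x : V]|)%N.
Proof.
move=> ND.
have N0 : N 0 = 0 by apply: (addIr (N 0)); rewrite -ND !add0r.
have NN x : N (- x) = - N x by apply: (addIr (N x)); rewrite -ND !addNr.
pose r y := odflt 0 [pick z | N z == y].
have rP x : N (r (N x)) = N x by rewrite /r; case: pickP => [z /eqP // | /(_ x)]; rewrite eqxx.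
pose F x := (x - r (N x), N x).
have F_inj : injective F by move=> x y [+ eN]; rewrite eN => /addIr.
rewrite -cardsX -(card_imset _ F_inj); apply/subset_leq_card/subsetP => _ /imsetP [x _ ->].
by rewrite !inE /= ND NN rP subrr eqxx imset_f.
Qed.

Section LinearisedPolynomials.
Variables (L : finFieldType) (p k h : nat).
Hypotheses (p_prime : prime p) (k_gt0 : (0 < k)%N) (h_gt0 : (0 < h)%N)
  (card_L : #|L| = ((p ^ k) ^ h)%N).
Local Notation q := (p ^ k)%N.

Lemma q_gt1 : (1 < q)%N.
Proof. by rewrite -{1}(expn0 p) ltn_exp2l ?prime_gt1. Qed.

Lemma pchar_nat_qX l : [pchar L].-nat (q ^ l)%N.
Proof.
have pL : p \in [pchar L].
  by apply: (@card_finPcharP _ _ (k * h)); rewrite // card_L -expnM.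
by rewrite -expnM pnatX (eq_pnat _ (pcharf_eq pL)) pnat_id ?orbT.
Qed.

Lemma frobqD l (x y : L) : (x + y) ^+ (q ^ l) = x ^+ (q ^ l) + y ^+ (q ^ l).
Proof. exact: exprDn_pchar (pchar_nat_qX l). Qed.

Lemma frobqN l (x : L) : (- x) ^+ (q ^ l) = - x ^+ (q ^ l).
Proof. exact: exprNn_pchar (pchar_nat_qX l). Qed.

Lemma inFq_opp1 : inFq q (-1 : L).
Proof. by have := frobqN 1 1; rewrite expn1 expr1n /inFq => ->. Qed.

Lemma linpoly_Fq_linear (a : 'I_h -> L) : Fq_linear q (linpoly q a).
Proof.
split=> [x y | c x /eqP cq]; rewrite /linpoly.
  by rewrite -big_split; apply: eq_bigr => l _; rewrite frobqD mulrDr.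
have cqX l : c ^+ (q ^ l) = c by elim: l => // l IH; rewrite expnSr exprM IH.
by rewrite mulr_sumr; apply: eq_bigr => l _; rewrite exprMn cqX mulrCA.
Qed.

Lemma card_linpoly_roots (a : 'I_h -> L) :
  (exists l, a l != 0) -> (#|[set x | linpoly q a x == 0%R]| <= q ^ h.-1)%N.
Proof.
move=> [l0 al0].
pose P : {poly L} := \sum_(l < h) a l *: 'X^(q ^ l).
have hornP x : P.[x] = linpoly q a x.
  by rewrite /P horner_sum; apply: eq_bigr => l _; rewrite hornerZ hornerXn.
have coefP (l : 'I_h) : P`_(q ^ l) = a l.
  rewrite /P coef_sum (bigD1 l) //= coefZ coefXn eqxx mulr1 big1 ?addr0 // => j jl.
  by rewrite coefZ coefXn eqn_exp2l ?q_gt1 // (inj_eq val_inj) eq_sym (negbTE jl) mulr0.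
have P0 : P != 0 by apply: contraNneq al0 => P0; rewrite -coefP P0 coef0.
have sizeP : (size P <= (q ^ h.-1).+1)%N.
  apply: leq_trans (size_sum _ _ _) _; apply/bigmax_leqP => l _.
  apply: leq_trans (size_scale_leq _ _) _.
  by rewrite size_polyXn ltnS leq_exp2l ?q_gt1 // -ltnS prednK.
rewrite -ltnS (leq_trans _ sizeP) // cardE max_poly_roots ?enum_uniq //.
by apply/allP => x; rewrite mem_enum inE /root hornP.
Qed.

Lemma linpoly_inj (a b : 'I_h -> L) : linpoly q a =1 linpoly q b -> a =1 b.
Proof.
move=> eq_ab l; apply/eqP; rewrite -subr_eq0; apply/negP => /negP ab_l.
suff roots : [set x | linpoly q (fun l => a l - b l) x == 0] = [set: L].
  have := @card_linpoly_roots (fun l => a l - b l) (ex_intro _ l ab_l).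
  by rewrite roots cardsT card_L leq_exp2l ?q_gt1 // leqNgt ltn_predL h_gt0.
apply/setP => x; rewrite !inE /linpoly.
under eq_bigr => j _ do rewrite mulrBl.
by rewrite sumrB -/(linpoly q a x) -/(linpoly q b x) eq_ab subrr eqxx.
Qed.

Definition Fq : {set L} := [set c | inFq q c].

Lemma FqE c : (c \in Fq) = (c ^+ q == c).
Proof. by rewrite inE. Qed.

Lemma frob1D (x y : L) : (x + y) ^+ q = x ^+ q + y ^+ q.
Proof. by have := frobqD 1 x y; rewrite expn1. Qed.

Lemma Fq0 : 0 \in Fq. Proof. by rewrite FqE expr0n eqn0Ngt (ltnW q_gt1). Qed.
Lemma Fq1 : 1 \in Fq. Proof. by rewrite FqE expr1n. Qed.
Lemma FqD c d : c \in Fq -> d \in Fq -> c + d \in Fq.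
Proof. by rewrite !FqE frob1D => /eqP-> /eqP->. Qed.
Lemma FqN c : c \in Fq -> - c \in Fq.
Proof. by rewrite !FqE -(expn1 q) frobqN expn1 => /eqP->. Qed.
Lemma FqM c d : c \in Fq -> d \in Fq -> c * d \in Fq.
Proof. by rewrite !FqE exprMn => /eqP-> /eqP->. Qed.
Lemma FqV c : c \in Fq -> c^-1 \in Fq.
Proof. by rewrite !FqE exprVn => /eqP->. Qed.

(* [Fq] is the kernel of [x |-> x^q - x], whose image consists of roots of the trace
   polynomial [sum_(l < h) X^(q^l)], hence has at most [q^(h-1)] elements. *)
Lemma card_Fq_ge : (q <= #|Fq|)%N.
Proof.
pose N (x : L) := x ^+ q - x.
have ND : {morph N : x y / x + y} by move=> x y; rewrite /N frob1D opprD addrACA.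
have := card_ker_im ND.
have -> : [set x | N x == 0] = Fq by apply/setP => x; rewrite inE FqE subr_eq0.
have im_roots : [set N x | x : L] \subset [set y | linpoly q (fun _ : 'I_h => 1) y == 0].
  apply/subsetP => _ /imsetP [x _ ->]; rewrite inE /linpoly.
  under eq_bigr => l _ do rewrite mul1r /N frobqD frobqN -exprM -expnS.
  rewrite -(big_mkord xpredT (fun l => x ^+ (q ^ l.+1) - x ^+ (q ^ l))).
  by rewrite telescope_sumr // -card_L expf_card expn0 expr1 subrr.
have im_le := leq_trans (subset_leq_card im_roots)
  (card_linpoly_roots (ex_intro _ (Ordinal h_gt0) (oner_neq0 L))).
rewrite card_L -(prednK h_gt0) expnS mulnC => ker_im.
have qX_gt0 : (0 < q ^ h.-1)%N by rewrite expn_gt0 (ltnW q_gt1).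
by rewrite -(leq_pmul2l qX_gt0) (leq_trans ker_im) // mulnC leq_mul2r im_le orbT.
Qed.

Fixpoint Fq_span (s : seq L) : {set L} :=
  if s is x :: s' then [set u.1 * x + u.2 | u in setX Fq (Fq_span s')] else [set 0].

Lemma Fq_span0 s : 0 \in Fq_span s.
Proof.
elim: s => [|x s IH] /=; first by rewrite inE.
by apply/imsetP; exists (0, 0); rewrite ?in_setX ?Fq0 ?IH /= ?mul0r ?addr0.
Qed.

Lemma Fq_spanD s y z : y \in Fq_span s -> z \in Fq_span s -> y + z \in Fq_span s.
Proof.
elim: s y z => [|x s IH] /= y z; first by rewrite !inE => /eqP-> /eqP->; rewrite addr0.
move=> /imsetP [[c y'] /setXP [cF yS] ->] /imsetP [[d z'] /setXP [dF zS] ->] /=.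
by apply/imsetP; exists (c + d, y' + z'); rewrite ?in_setX ?FqD ?IH // mulrDl addrACA.
Qed.

Lemma Fq_spanZ s c y : c \in Fq -> y \in Fq_span s -> c * y \in Fq_span s.
Proof.
elim: s y => [|x s IH] /= y cF; first by rewrite !inE => /eqP->; rewrite mulr0.
move=> /imsetP [[d y'] /setXP [dF yS] ->] /=.
by apply/imsetP; exists (c * d, c * y'); rewrite ?in_setX ?FqM ?IH // mulrDr mulrA.
Qed.

Lemma card_Fq_span_cons x s :
  x \notin Fq_span s -> #|Fq_span (x :: s)| = (#|Fq| * #|Fq_span s|)%N.
Proof.
move=> xNs; rewrite /= card_in_imset ?cardsX //.
move=> -[c y] [d z] /setXP [cF yS] /setXP [dF zS] /= eq_cd.
have [cd | neq_cd] := eqVneq c d; first by move: eq_cd; rewrite cd => /addrI ->.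
case/negP: xNs; have cd0 : c - d != 0 by rewrite subr_eq0.
have -> : x = (c - d)^-1 * (z - y).
  by apply: (mulfI cd0); rewrite mulVKf // mulrBl (canRL (addrK y) eq_cd); ring.
by rewrite Fq_spanZ ?FqV ?FqD ?FqN // Fq_spanD // -mulN1r Fq_spanZ ?FqN ?Fq1.
Qed.

Lemma exists_Fq_basis :
  exists s, Fq_span s = [set: L] /\ #|Fq_span s| = (#|Fq| ^ size s)%N.
Proof.
have Fq_gt1 : (1 < #|Fq|)%N := leq_trans q_gt1 card_Fq_ge.
suff: forall s, #|Fq_span s| = (#|Fq| ^ size s)%N ->
    exists s', Fq_span s' = [set: L] /\ #|Fq_span s'| = (#|Fq| ^ size s')%N.
  by move/(_ [::]); apply; rewrite /= cards1.
move=> s; have [N] := ubnP (#|L| - #|Fq_span s|); elim: N s => // N IH s ltN card_s.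
have [x xNs | s_full] := pickP (fun x => x \notin Fq_span s); last first.
  by exists s; split=> //; apply/setP => x; rewrite inE; apply/negbFE/s_full.
apply: (IH (x :: s)); last by rewrite card_Fq_span_cons //= card_s expnS.
have grow : (#|Fq_span s| < #|Fq_span (x :: s)|)%N.
  rewrite card_Fq_span_cons // -{1}(mul1n #|Fq_span s|) ltn_mul2r Fq_gt1 andbT.
  by rewrite card_gt0; apply/set0Pn; exists 0; apply: Fq_span0.
have lt_L : (#|Fq_span s| < #|L|)%N := leq_trans grow (max_card _).
by rewrite -ltnS (leq_trans _ ltN) // ltnS ltn_sub2l.
Qed.

Lemma Fq_linear_eq_span (T U : L -> L) s : Fq_linear q T -> Fq_linear q U ->
  {in s, T =1 U} -> {in Fq_span s, T =1 U}.
Proof.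
move=> Tlin Ulin; elim: s => [|x s IH] eq_TU y /=.
  by rewrite inE => /eqP->; rewrite (Fq_linear0 Tlin) (Fq_linear0 Ulin).
move=> /imsetP [[c y'] /setXP [cF yS] ->] /=; rewrite inE in cF.
rewrite Tlin.1 Ulin.1 Tlin.2 // Ulin.2 // eq_TU ?mem_head // IH // => z zs.
by apply: eq_TU; rewrite in_cons zs orbT.
Qed.

(* The evaluations of the [|L|^h] linearised polynomials at an F_q-basis are pairwise
   distinct, and there are at most [|L|^h] possible tuples of values. *)
Lemma linpoly_surj (T : L -> L) : Fq_linear q T -> exists a : 'I_h -> L, linpoly q a =1 T.
Proof.
move=> Tlin; have [s [s_full card_s]] := exists_Fq_basis.
have eq_span (U V : L -> L) : Fq_linear q U -> Fq_linear q V ->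
    (forall i : 'I_(size s), U (nth 0 s i) = V (nth 0 s i)) -> U =1 V.
  move=> Ulin Vlin eqUV x; have x_span : x \in Fq_span s by rewrite s_full inE.
  apply: (Fq_linear_eq_span Ulin Vlin _ x_span) => y ys.
  by have := eqUV (Ordinal (etrans (index_mem y s) ys)); rewrite /= nth_index.
pose G (a : {ffun 'I_h -> L}) := [ffun i : 'I_(size s) => linpoly q a (nth 0 s i)].
have G_inj : injective G.
  move=> a b /ffunP eq_ab; apply/ffunP/linpoly_inj/eq_span; try exact: linpoly_Fq_linear.
  by move=> i; have := eq_ab i; rewrite !ffunE.
have size_s : (size s <= h)%N.
  have Fq_gt1 : (1 < #|Fq|)%N := leq_trans q_gt1 card_Fq_ge.
  rewrite -(leq_exp2l _ _ Fq_gt1) -card_s s_full cardsT card_L.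
  by rewrite leq_exp2r ?card_Fq_ge.
have card_dom : (#|{ffun 'I_(size s) -> L}| <= #|{ffun 'I_h -> L}|)%N.
  by rewrite !card_ffun !card_ord leq_pexp2l // card_L expn_gt0 (ltnW q_gt1).
have /codomP [a Ga] := inj_card_onto G_inj card_dom [ffun i : 'I_(size s) => T (nth 0 s i)].
exists a; apply: eq_span => [|//|i]; first exact: linpoly_Fq_linear.
by move/ffunP: Ga => /(_ i); rewrite !ffunE.
Qed.

End LinearisedPolynomials.

(** * Codes determined by any three coordinates *)

Section ThreeCoordinateCodes.
Variables (L : finFieldType) (q n : nat) (C : {set 'rV[L]_n}).
Hypotheses (C0 : 0 \in C)
  (CD : forall x y, x \in C -> y \in C -> x + y \in C)
  (CZ : forall c x, inFq q c -> x \in C -> c *: x \in C)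
  (Fq_opp1 : inFq q (-1 : L))
  (C_dist : forall x y, x \in C -> y \in C -> x != y -> (n - 2 <= hdist x y)%N)
  (card_C : #|C| = (#|L| ^ 3)%N).
Implicit Types (a b c i j l t : 'I_n) (w : 'rV[L]_n).

Lemma C_sub x y : x \in C -> y \in C -> x - y \in C.
Proof. by move=> xC yC; rewrite CD // -scaleN1r CZ. Qed.

Definition dist3 a b c := [&& a != b, a != c & b != c].
Definition notin3 t a b c := [&& t != a, t != b & t != c].

Lemma dist3_swap a b c : dist3 a b c -> dist3 a c b.
Proof. by case/and3P => ab ac bc; rewrite /dist3 ab ac eq_sym bc. Qed.

Lemma dist3_rot a b c : dist3 a b c -> dist3 b a c.
Proof. by case/and3P => ab ac bc; rewrite /dist3 eq_sym ab ac bc. Qed.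

Lemma notin3_rot t a b c : notin3 t a b c -> notin3 t b a c.
Proof. by case/and3P => ta tb tc; rewrite /notin3 ta tb tc. Qed.

Lemma notin3_swap t a b c : notin3 t a b c -> notin3 t a c b.
Proof. by case/and3P => ta tb tc; rewrite /notin3 ta tb tc. Qed.

Lemma eq_on3 a b c x y : dist3 a b c -> x \in C -> y \in C ->
  x ord0 a = y ord0 a -> x ord0 b = y ord0 b -> x ord0 c = y ord0 c -> x = y.
Proof.
move=> /and3P [ab ac bc] xC yC ea eb ec; apply/eqP/negPn/negP => xy.
have := C_dist xC yC xy; rewrite /hdist; set S := [set _ | _].
have SI0 : S :&: [set a; b; c] = set0.
  apply/setP => s; rewrite !inE.
  have [->|_] := eqVneq s a; first by rewrite ea eqxx.
  have [->|_] := eqVneq s b; first by rewrite eb eqxx.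
  have [->|_] := eqVneq s c; first by rewrite ec eqxx.
  by rewrite andbF.
have card3 : #|[set a; b; c]| = 3%N by rewrite -setUA cardsU1 cards2 bc !inE negb_or ab ac.
have := cardsUI S [set a; b; c]; rewrite SI0 cards0 addn0 card3.
have : (#|S :|: [set a; b; c]| <= n)%N by apply: leq_trans (max_card _) _; rewrite card_ord.
lia.
Qed.

Lemma eq0_on3 a b c w : dist3 a b c -> w \in C ->
  w ord0 a = 0 -> w ord0 b = 0 -> w ord0 c = 0 -> w = 0.
Proof. by move=> abc wC wa wb wc; apply: (eq_on3 abc) => //; rewrite mxE. Qed.

Lemma exists_on3 a b c xa xb xc : dist3 a b c ->
  exists2 w, w \in C & [/\ w ord0 a = xa, w ord0 b = xb & w ord0 c = xc].
Proof.
move=> abc; pose F w := (w ord0 a, w ord0 b, w ord0 c).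
have F_inj : {in C &, injective F} by move=> x y xC yC [] /(eq_on3 abc xC yC); apply.
have : F @: C = [set: L * L * L].
  apply/eqP; rewrite eqEcard subsetT card_in_imset // cardsT card_C !card_prod.
  by rewrite /= !expnS expn0 muln1 mulnA.
move/setP/(_ (xa, xb, xc)); rewrite inE => /imsetP [w wC [-> -> ->]].
by exists w.
Qed.

Definition axis a b c x : 'rV[L]_n :=
  odflt 0 [pick w in C | [&& w ord0 a == x, w ord0 b == 0 & w ord0 c == 0]].

Lemma axisP a b c x : dist3 a b c ->
  [/\ axis a b c x \in C, axis a b c x ord0 a = x,
      axis a b c x ord0 b = 0 & axis a b c x ord0 c = 0].
Proof.
move=> abc; rewrite /axis; case: pickP => [w /andP [wC /and3P [/eqP-> /eqP-> /eqP->]] //|].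
have [w wC [wa wb wc]] := exists_on3 x 0 0 abc.
by move/(_ w); rewrite wC wa wb wc !eqxx.
Qed.

Lemma axis_uniq a b c w : dist3 a b c -> w \in C ->
  w ord0 b = 0 -> w ord0 c = 0 -> w = axis a b c (w ord0 a).
Proof.
move=> abc wC wb wc; have [eC ea eb ec] := axisP (w ord0 a) abc.
by apply: (eq_on3 abc); rewrite ?ea ?eb ?ec.
Qed.

Lemma axis_sym a b c : dist3 a b c -> axis a c b =1 axis a b c.
Proof.
move=> abc x; have [eC ea ec eb] := axisP x (dist3_swap abc).
by rewrite (axis_uniq abc eC eb ec) ea.
Qed.

Lemma axisD a b c x y : dist3 a b c -> axis a b c (x + y) = axis a b c x + axis a b c y.
Proof.
move=> abc; have [eC ea eb ec] := axisP x abc; have [fC fa fb fc] := axisP y abc.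
by rewrite [RHS](axis_uniq abc) ?CD // !mxE ?ea ?fa ?eb ?fb ?ec ?fc ?addr0.
Qed.

Lemma axisZ a b c d x : dist3 a b c -> inFq q d -> axis a b c (d * x) = d *: axis a b c x.
Proof.
move=> abc dq; have [eC ea eb ec] := axisP x abc.
by rewrite [RHS](axis_uniq abc) ?CZ // !mxE ?ea ?eb ?ec ?mulr0.
Qed.

Lemma axis_decomp a b c w : dist3 a b c -> w \in C ->
  w = axis a b c (w ord0 a) + axis b a c (w ord0 b) + axis c a b (w ord0 c).
Proof.
move=> abc wC; have bac := dist3_rot abc; have cab := dist3_rot (dist3_swap abc).
have [eC ea eb ec] := axisP (w ord0 a) abc.
have [fC fb fa fc] := axisP (w ord0 b) bac.
have [gC gc ga gb] := axisP (w ord0 c) cab.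
by apply: (eq_on3 abc); rewrite ?CD // !mxE ?ea ?eb ?ec ?fa ?fb ?fc ?ga ?gb ?gc ?addr0 ?add0r.
Qed.

Lemma axis_coord_Fq_linear a b c t : dist3 a b c -> Fq_linear q (fun x => axis a b c x ord0 t).
Proof. by move=> abc; split=> [x y | d x dq]; rewrite ?axisD ?axisZ // mxE. Qed.

Lemma axis_coord_bij a b c t : dist3 a b c -> notin3 t a b c ->
  bijective (fun x => axis a b c x ord0 t).
Proof.
move=> abc /and3P [ta tb tc]; apply: injF_bij => x y /= exy.
have bct : dist3 b c t by case/and3P: abc => _ _ bc; rewrite /dist3 bc eq_sym tb eq_sym tc.
have [eC ea eb ec] := axisP x abc; have [fC fa fb fc] := axisP y abc.
have : axis a b c x - axis a b c y = 0.
  by apply: (eq0_on3 bct (C_sub eC fC)); rewrite !mxE ?eb ?fb ?ec ?fc ?exy subrr.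
by move/(congr1 (fun w => w ord0 a))/eqP; rewrite !mxE ea fa subr_eq0 => /eqP.
Qed.

Lemma skip_val i (j : 'I_n.-1) : val (skip i j) = bump i j.
Proof.
rewrite /skip insubdK // -topredE /= /bump.
by have := ltn_ord j; have := ltn_ord i; case: leqP => /= ij; lia.
Qed.

Lemma skip_onto i t : t != i -> exists j : 'I_n.-1, skip i j = t.
Proof.
move=> ti; have lt_t : (unbump i t < n.-1)%N.
  have := ltn_ord t; have := ltn_ord i; rewrite /unbump.
  by case: (ltnP i t) => /= it; move: ti; rewrite -(inj_eq val_inj) /=; lia.
by exists (Ordinal lt_t); apply: val_inj; rewrite skip_val /= unbumpK // inE.
Qed.

(* An F_q-equivalence of the projection from [i] with a linear code, read on the
   positions [t != i] of [C]: the coordinate maps [Th t] turn the scalar multiplication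
   of the linear code into an action of [L] on the codewords vanishing at [i]. *)
Definition proj_linearizer i (Th : 'I_n -> L -> L) : Prop :=
  (forall t, t != i -> Fq_linear q (Th t) /\ bijective (Th t)) /\
  (forall w lam, w \in C -> w ord0 i = 0 -> exists2 w', w' \in C &
     w' ord0 i = 0 /\ forall t, t != i -> Th t (w' ord0 t) = lam * Th t (w ord0 t)).

Lemma proj_linearizer_of_equiv i :
  equiv_to_linear q (proj C i) -> exists Th, proj_linearizer i Th.
Proof.
case=> D [[D0 DD DZ] [s [phi [phiP DE]]]].
pose J t := [pick j | skip i j == t].
have JP t : t != i -> exists2 j, J t = Some j & skip i j = t.
  move=> ti; rewrite /J; case: pickP => [j /eqP | none]; first by exists j.
  by have [j sj] := skip_onto ti; have := none j; rewrite sj eqxx.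
exists (fun t => if J t is Some j then phi (s^-1 j)%g else id); split.
  by move=> t /JP [j -> _]; apply: phiP.
move=> w lam wC wi.
pose r := \row_(j < n.-1) w ord0 (skip i j).
have rP : r \in proj C i by apply/imsetP; exists w; rewrite // inE wC wi eqxx.
pose d := \row_j phi j (r ord0 (s j)).
have dD : d \in D by rewrite DE; apply/imsetP; exists r.
have := DZ lam d dD; rewrite {1}DE => /imsetP [r' /imsetP [w' w'P ->] ed].
move: w'P; rewrite inE => /andP [w'C /eqP w'i].
exists w' => //; split => // t /JP [j -> sj].
have := congr1 (fun M : 'rV[L]_(n.-1) => M ord0 (s^-1 j)%g) ed.
by rewrite /d /r !mxE permKV sj.
Qed.

Section Projection.
Variables (i : 'I_n) (Th : 'I_n -> L -> L).
Hypothesis Th_lin : proj_linearizer i Th.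

Let Th_Fq t : t != i -> Fq_linear q (Th t).
Proof. by move=> ti; case: (Th_lin.1 t ti). Qed.

Let Th_inj t : t != i -> injective (Th t).
Proof. by move=> ti; case: (Th_lin.1 t ti) => _ /bij_inj. Qed.

Let Th_eq0 t x : t != i -> (Th t x == 0) = (x == 0).
Proof. by move=> ti; rewrite (Fq_linear_eq0 _ (Th_Fq ti) (Th_inj ti)). Qed.

Lemma Th_finvK t : t != i -> cancel (finv (Th t)) (Th t).
Proof. by move=> ti; apply/f_finv/Th_inj. Qed.

Lemma finv_ThK t : t != i -> cancel (Th t) (finv (Th t)).
Proof. by move=> ti; apply/finv_f/Th_inj. Qed.

Lemma axis_scale j l y y' lam : dist3 i j l -> Th j y' = lam * Th j y ->
  forall t, t != i -> Th t (axis j i l y' ord0 t) = lam * Th t (axis j i l y ord0 t).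
Proof.
move=> ijl eq_y t ti; have jil := dist3_rot ijl.
have ji : j != i by case/and3P: ijl; rewrite eq_sym.
have li : l != i by case/and3P: ijl => _; rewrite eq_sym.
have [eC ej ei el] := axisP y jil.
have [w' w'C [w'i w'P]] := Th_lin.2 _ lam eC ei.
have w'l : w' ord0 l = 0.
  by apply/eqP; rewrite -(Th_eq0 _ li) w'P // el (Fq_linear0 (Th_Fq li)) mulr0.
have w'j : w' ord0 j = y' by apply: (Th_inj ji); rewrite w'P // ej eq_y.
by rewrite -w'j -(axis_uniq jil w'C w'i w'l) w'P.
Qed.

Definition axis_ratio j l t := Th t (axis j i l 1 ord0 t) / Th j 1.

Lemma Th_axis j l t y : dist3 i j l -> t != i ->
  Th t (axis j i l y ord0 t) = axis_ratio j l t * Th j y.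
Proof.
move=> ijl ti; have ji : j != i by case/and3P: ijl; rewrite eq_sym.
have Thj1 : Th j 1 != 0 by rewrite Th_eq0 ?oner_neq0.
rewrite (@axis_scale j l 1 y (Th j y / Th j 1)) // ?divfK // /axis_ratio.
by rewrite mulrC mulrA mulrAC.
Qed.

Lemma axis_ratio_neq0 j l t : dist3 i j l -> notin3 t i j l -> axis_ratio j l t != 0.
Proof.
move=> ijl /and3P [ti tj tl]; have jil := dist3_rot ijl.
have ji : j != i by case/and3P: ijl; rewrite eq_sym.
have [ax_bij tji] : bijective (fun x => axis j i l x ord0 t) /\ t != i.
  by split=> //; apply: axis_coord_bij; rewrite // /notin3 tj ti tl.
rewrite mulf_neq0 ?invr_eq0 ?Th_eq0 ?oner_neq0 //.
by rewrite (Fq_linear_eq0 _ (axis_coord_Fq_linear _ jil) (bij_inj ax_bij)) oner_neq0.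
Qed.

Definition coord_ratio j l t := axis_ratio l j t / axis_ratio j l t.

Lemma axis_coord_eq j l t y z : dist3 i j l -> notin3 t i j l ->
  (axis j i l y ord0 t == axis l i j z ord0 t) = (Th j y == coord_ratio j l t * Th l z).
Proof.
move=> ijl tijl; have ti : t != i by case/and3P: tijl.
have rj := axis_ratio_neq0 ijl tijl.
rewrite -(inj_eq (Th_inj ti)) (Th_axis _ ijl ti) (Th_axis _ (dist3_swap ijl) ti).
apply/eqP/eqP => [e | ->]; last by rewrite /coord_ratio mulrA mulrCA divff // mulr1.
by apply: (mulfI rj); rewrite e /coord_ratio mulrA mulrCA divff // mulr1.
Qed.

Lemma coord_ratio_neq0 j l t : dist3 i j l -> notin3 t i j l -> coord_ratio j l t != 0.
Proof.
move=> ijl /and3P [ti tj tl].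
rewrite mulf_neq0 ?invr_eq0 ?axis_ratio_neq0 ?/notin3 ?ti ?tj ?tl //.
exact: dist3_swap.
Qed.

(* Two positions [t != t'] with equal ratios would give a nonzero codeword vanishing
   at [i], [t] and [t']. *)
Lemma coord_ratio_inj j l t t' : dist3 i j l -> notin3 t i j l -> notin3 t' i j l ->
  t != t' -> coord_ratio j l t != coord_ratio j l t'.
Proof.
move=> ijl tijl t'ijl tt'; apply/negP => /eqP r_eq.
have ji : j != i by case/and3P: ijl; rewrite eq_sym.
have li : l != i by case/and3P: ijl => _; rewrite eq_sym.
have [[Thj' _ Thj'K] [Thl' _ Thl'K]] : bijective (Th j) /\ bijective (Th l).
  by split; [case: (Th_lin.1 j ji) | case: (Th_lin.1 l li)].
set y := Thj' (coord_ratio j l t); set z := Thl' 1.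
have meet u : notin3 u i j l -> coord_ratio j l u = coord_ratio j l t ->
    axis j i l y ord0 u = axis l i j z ord0 u.
  by move=> uijl ru; apply/eqP; rewrite axis_coord_eq // Thj'K Thl'K mulr1 ru.
have [eC ej ei el] := axisP y (dist3_rot ijl).
have [fC fl fi fj] := axisP z (dist3_rot (dist3_swap ijl)).
have itt' : dist3 i t t'.
  by case/and3P: tijl => ti _ _; case/and3P: t'ijl => t'i _ _; rewrite /dist3 eq_sym ti eq_sym t'i.
have : axis j i l y - axis l i j z = 0.
  apply: (eq0_on3 itt'); rewrite ?C_sub // !mxE; first by rewrite ei fi subrr.
    by rewrite meet ?subrr.
  by rewrite meet ?subrr // r_eq.
move/(congr1 (fun w => w ord0 l))/eqP; rewrite !mxE el fl sub0r oppr_eq0.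
by rewrite -(Th_eq0 _ li) Thl'K oner_eq0.
Qed.

End Projection.

Definition proportional (th : 'I_n -> L -> L) a b c : Prop :=
  forall t, exists alpha, forall x, th t (axis a b c x ord0 t) = alpha * th a x.

Lemma proportional_outside th a b c : dist3 a b c -> (forall t, Fq_linear q (th t)) ->
  (forall t, notin3 t a b c ->
     exists alpha, forall x, th t (axis a b c x ord0 t) = alpha * th a x) ->
  proportional th a b c.
Proof.
move=> abc th_lin th_out t.
have [-> | ta] := eqVneq t a.
  by exists 1 => x; have [_ -> _ _] := axisP x abc; rewrite mul1r.
have [-> | tb] := eqVneq t b.
  by exists 0 => x; have [_ _ -> _] := axisP x abc; rewrite mul0r (Fq_linear0 (th_lin b)).
have [-> | tc] := eqVneq t c.
  by exists 0 => x; have [_ _ _ ->] := axisP x abc; rewrite mul0r (Fq_linear0 (th_lin c)).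
by apply: th_out; rewrite /notin3 ta tb tc.
Qed.

(* Writing [w] as the sum of its three axis components, each component is scaled by
   [lam] in the coordinates [th] by rescaling its value at its own axis. *)
Lemma equiv_linear_of_proportional th a b c : dist3 a b c ->
  (forall t, Fq_linear q (th t) /\ bijective (th t)) ->
  proportional th a b c -> proportional th b a c -> proportional th c a b ->
  equiv_to_linear q C.
Proof.
move=> abc th_bij pa pb pc; have bac := dist3_rot abc; have cab := dist3_rot (dist3_swap abc).
have th_lin t : Fq_linear q (th t) by case: (th_bij t).
exists [set \row_s th s (w ord0 ((1%g : 'S_n) s)) | w : 'rV[L]_n in C].
split; last by exists 1%g, th.
split.
- apply/imsetP; exists 0 => //; apply/rowP => t.
  by rewrite !mxE (Fq_linear0 (th_lin t)).
- move=> _ _ /imsetP [w1 w1C ->] /imsetP [w2 w2C ->]; apply/imsetP; exists (w1 + w2).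
    exact: CD.
  by apply/rowP => t; rewrite !mxE ?perm1 (th_lin t).1.
move=> lam _ /imsetP [w wC ->].
have [tha' _ thaK] := (th_bij a).2; have [thb' _ thbK] := (th_bij b).2.
have [thc' _ thcK] := (th_bij c).2.
pose xa := tha' (lam * th a (w ord0 a)); pose xb := thb' (lam * th b (w ord0 b)).
pose xc := thc' (lam * th c (w ord0 c)).
apply/imsetP; exists (axis a b c xa + axis b a c xb + axis c a b xc).
  by rewrite !CD //; [case: (axisP xa abc) | case: (axisP xb bac) | case: (axisP xc cab)].
apply/rowP => t; rewrite !mxE ?perm1 [w in LHS](axis_decomp abc wC) !mxE !(th_lin t).1.
have [al ea] := pa t; have [be eb] := pb t; have [ga ec] := pc t.
by rewrite !ea !eb !ec thaK thbK thcK; ring.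
Qed.

(** * Comparing the projections from three positions *)

Section ThreeProjections.
Variables (a b c k0 : 'I_n) (Tha Thb Thc : 'I_n -> L -> L).
Hypotheses (abc : dist3 a b c) (k0_out : notin3 k0 a b c)
  (Tha_lin : proj_linearizer a Tha) (Thb_lin : proj_linearizer b Thb)
  (Thc_lin : proj_linearizer c Thc).

Let bac : dist3 b a c := dist3_rot abc.
Let cab : dist3 c a b := dist3_rot (dist3_swap abc).
Let cba : dist3 c b a := dist3_rot (dist3_swap bac).
Let ab : a != b. Proof. by case/and3P: abc. Qed.
Let ac : a != c. Proof. by case/and3P: abc. Qed.
Let bc : b != c. Proof. by case/and3P: abc. Qed.
Let ba : b != a. Proof. by rewrite eq_sym. Qed.
Let ca : c != a. Proof. by rewrite eq_sym. Qed.

Definition ratio_a t := coord_ratio a Tha b c t.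
Definition ratio_b t := coord_ratio b Thb a c t.
Definition ratio_c t := coord_ratio c Thc a b t.

(* The axis codewords at [a] and [b] agreeing with [axis c a b z] at [t] have values
   [x] and [y] at their axes; reading [x] and [y] in the coordinates of the projections
   from [b], [a] and [c] links the three coordinate systems. *)
Lemma transition t z : notin3 t a b c ->
  Thc a (finv (Thb a) (ratio_b t * Thb c z))
  = ratio_c t * Thc b (finv (Tha b) (ratio_a t * Tha c z)).
Proof.
move=> tabc; set x := finv _ _; set y := finv _ _.
have Thb_x : Thb a x = ratio_b t * Thb c z by apply: (Th_finvK Thb_lin ab).
have Tha_y : Tha b y = ratio_a t * Tha c z by apply: (Th_finvK Tha_lin ba).
have xz : axis a b c x ord0 t = axis c a b z ord0 t.
  apply/eqP; rewrite -(axis_sym cab) (axis_coord_eq Thb_lin) ?Thb_x //.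
  exact: notin3_rot.
have yz : axis b a c y ord0 t = axis c a b z ord0 t.
  by apply/eqP; rewrite (axis_coord_eq Tha_lin) ?Tha_y.
apply/eqP; rewrite -(axis_coord_eq Thc_lin) //; last exact/notin3_rot/notin3_swap.
by rewrite (axis_sym abc) (axis_sym bac) xz yz.
Qed.

Let ratio_a_neq0 t : notin3 t a b c -> ratio_a t != 0.
Proof. exact: (coord_ratio_neq0 Tha_lin abc). Qed.

Let ratio_b_neq0 t : notin3 t a b c -> ratio_b t != 0.
Proof. by move=> tabc; apply: (coord_ratio_neq0 Thb_lin bac); apply: notin3_rot. Qed.

Let ratio_c_neq0 t : notin3 t a b c -> ratio_c t != 0.
Proof.
by move=> tabc; apply: (coord_ratio_neq0 Thc_lin cab); apply/notin3_rot/notin3_swap.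
Qed.

Let ratio_a0 := ratio_a_neq0 k0_out.
Let ratio_b0 := ratio_b_neq0 k0_out.
Let ratio_c0 := ratio_c_neq0 k0_out.

(* The changes of coordinates at [b] (from the projection from [a] to the one from [c])
   and at [a] (from [b] to [c]), normalised at [k0]: the pair of maps satisfying
   (Prop_m). *)
Definition recoord_b v := ratio_c k0 * Thc b (finv (Tha b) (ratio_a k0 * v)).
Definition recoord_a u := Thc a (finv (Thb a) (ratio_b k0 * u)).

Lemma recoord_b_Fq_linear : Fq_linear q recoord_b.
Proof.
apply: Fq_linear_mull; apply: (Fq_linear_comp (Thc_lin.1 b bc).1); apply: Fq_linear_mulr.
exact: Fq_linear_can (Tha_lin.1 b ba).1 (finv_ThK Tha_lin ba) (Th_finvK Tha_lin ba).
Qed.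

Lemma recoord_a_Fq_linear : Fq_linear q recoord_a.
Proof.
apply: (Fq_linear_comp (Thc_lin.1 a ac).1); apply: Fq_linear_mulr.
exact: Fq_linear_can (Thb_lin.1 a ab).1 (finv_ThK Thb_lin ab) (Th_finvK Thb_lin ab).
Qed.

Lemma recoord_b_bij : bijective recoord_b.
Proof.
have [_ /bij_inj Thc_inj] := Thc_lin.1 b bc.
have finv_inj := can_inj (Th_finvK Tha_lin ba).
by apply: injF_bij => v v' /(mulfI ratio_c0) /Thc_inj /finv_inj /(mulfI ratio_a0).
Qed.

Lemma recoord_a_bij : bijective recoord_a.
Proof.
have [_ /bij_inj Thc_inj] := Thc_lin.1 a ac.
have finv_inj := can_inj (Th_finvK Thb_lin ab).
by apply: injF_bij => u u' /Thc_inj /finv_inj /(mulfI ratio_b0).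
Qed.

Let mulK (x y u : L) : x != 0 -> x * (y / x * u) = y * u.
Proof. by move=> x0; rewrite mulrCA mulrA divfK. Qed.

Let divK (x y u : L) : x != 0 -> y / x * (x * u) = y * u.
Proof. by move=> x0; rewrite mulrA divfK. Qed.

Lemma recoord_scaling t z : notin3 t a b c ->
  recoord_a (ratio_b t / ratio_b k0 * Thb c z)
  = ratio_c t / ratio_c k0 * recoord_b (ratio_a t / ratio_a k0 * Tha c z).
Proof. by move=> tabc; rewrite /recoord_b /recoord_a !mulK // divK // transition. Qed.

Lemma Prop_m_linpoly h m (e : 'I_m -> 'I_n) (fa ga : 'I_h -> L) :
  injective e -> (forall j : 'I_m, notin3 (e j) a b c) ->
  (forall j : 'I_m, val j = 0%N -> e j = k0) ->
  linpoly q fa =1 recoord_b -> linpoly q ga =1 recoord_a -> Prop_m q m fa ga.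
Proof.
move=> e_inj e_out e0 faE gaE.
have fa_inj : injective (linpoly q fa).
  by apply: eq_inj (bij_inj recoord_b_bij) _ => v; rewrite faE.
have ga_inj : injective (linpoly q ga).
  by apply: eq_inj (bij_inj recoord_a_bij) _ => u; rewrite gaE.
have ratio_inj (r : 'I_n -> L) : r k0 != 0 ->
    (forall t t', notin3 t a b c -> notin3 t' a b c -> t != t' -> r t != r t') ->
    injective (fun j : 'I_m => r (e j) / r k0).
  move=> r0 r_inj j j' /(mulIf (invr_neq0 r0)) /eqP; apply: contraTeq => jj'.
  by apply: r_inj; rewrite ?e_out // (inj_eq e_inj).
exists (fun j : 'I_m => ratio_c (e j) / ratio_c k0),
  (fun j : 'I_m => ratio_a (e j) / ratio_a k0),
  (fun j : 'I_m => ratio_b (e j) / ratio_b k0); split.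
- move=> j; split; apply: mulf_neq0; rewrite ?invr_eq0;
    by [apply: ratio_c_neq0 | apply: ratio_a_neq0 | apply: ratio_b_neq0].
- by move=> j /e0 ->; rewrite !divff.
- move=> j x; rewrite !faE !gaE.
  have := f_finv fa_inj x; have := f_finv ga_inj x; rewrite faE gaE.
  set u := finv _ x; set v := finv _ x => gu fv.
  have vz : v = Tha c (finv (Tha c) v) by rewrite (Th_finvK Tha_lin ca).
  have uz : u = Thb c (finv (Tha c) v).
    apply: (bij_inj recoord_a_bij); have := recoord_scaling (finv (Tha c) v) k0_out.
    by rewrite !divff // !mul1r -vz fv gu.
  by rewrite uz [in LHS]vz recoord_scaling.
split; apply: ratio_inj => // t t' tabc t'abc tt'; rewrite /ratio_c /ratio_a /ratio_b.
- exact: (coord_ratio_inj Thc_lin cab (notin3_rot (notin3_swap tabc))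
    (notin3_rot (notin3_swap t'abc)) tt').
- exact: (coord_ratio_inj Tha_lin abc tabc t'abc tt').
- exact: (coord_ratio_inj Thb_lin bac (notin3_rot tabc) (notin3_rot t'abc) tt').
Qed.

(* With [recoord_b] semilinear, taking [recoord_b \o Tha c] as coordinate map at [c] (and
   those of the projection from [c] elsewhere) makes the three axes proportional. *)
Lemma equiv_linear_of_semilinear :
  (exists e : nat, forall x v, recoord_b (x * v) = x ^+ e * recoord_b v) ->
  equiv_to_linear q C.
Proof.
move=> [e recoord_b_semi]; pose th t := if t == c then recoord_b \o Tha c else Thc t.
have th_out t : t != c -> th t = Thc t by rewrite /th => /negbTE ->.
have th_bij t : Fq_linear q (th t) /\ bijective (th t).
  rewrite /th; case: eqP => [_ | /eqP tc]; last exact: Thc_lin.1 t tc.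
  have [Thac_lin Thac_bij] := Tha_lin.1 c ca.
  split; first exact: Fq_linear_comp recoord_b_Fq_linear Thac_lin.
  exact: bij_comp recoord_b_bij Thac_bij.
have th_lin t : Fq_linear q (th t) by case: (th_bij t).
apply: (equiv_linear_of_proportional abc th_bij).
- apply: proportional_outside => // t /and3P [ta tb tc].
  exists (axis_ratio c Thc a b t) => x.
  by rewrite !th_out // -(axis_sym abc) (Th_axis Thc_lin _ cab tc).
- apply: proportional_outside => // t /and3P [tb ta tc].
  exists (axis_ratio c Thc b a t) => y.
  by rewrite !th_out // -(axis_sym bac) (Th_axis Thc_lin _ cba tc).
apply: proportional_outside => // t tcab.
have tabc : notin3 t a b c by case/and3P: tcab => tc ta tb; rewrite /notin3 ta tb tc.
have tc : t != c by case/and3P: tcab.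
exists (axis_ratio c Thc b a t / ratio_c k0 * (ratio_a t / ratio_a k0) ^+ e) => z.
set y := finv (Tha b) (ratio_a t * Tha c z).
have yz : axis b a c y ord0 t = axis c a b z ord0 t.
  by apply/eqP; rewrite (axis_coord_eq Tha_lin) // (Th_finvK Tha_lin ba).
have recoord_y : (ratio_a t / ratio_a k0) ^+ e * recoord_b (Tha c z) = ratio_c k0 * Thc b y.
  by rewrite -recoord_b_semi /recoord_b mulK.
rewrite th_out // -yz -(axis_sym bac) (Th_axis Thc_lin _ cba tc) /th eqxx /=.
by rewrite -mulrA recoord_y divK.
Qed.

Lemma equiv_linear_of_Prop_m h m (e : 'I_m -> 'I_n) :
  (forall T, Fq_linear q T -> exists fa : 'I_h -> L, linpoly q fa =1 T) ->
  (forall fa ga : 'I_h -> L, lp_invertible q fa -> lp_invertible q ga ->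
     Prop_m q m fa ga -> lp_monomial fa /\ lp_monomial ga) ->
  injective e -> (forall j : 'I_m, notin3 (e j) a b c) ->
  (forall j : 'I_m, val j = 0%N -> e j = k0) ->
  equiv_to_linear q C.
Proof.
move=> lp_surj Prop_m_mono e_inj e_out e0.
have [fa faE] := lp_surj _ recoord_b_Fq_linear.
have [ga gaE] := lp_surj _ recoord_a_Fq_linear.
have fa_bij : bijective (linpoly q fa) by apply: (eq_bij recoord_b_bij) => v; rewrite faE.
have ga_bij : bijective (linpoly q ga) by apply: (eq_bij recoord_a_bij) => u; rewrite gaE.
have [fa_mono _] := Prop_m_mono _ _ fa_bij ga_bij (Prop_m_linpoly e_inj e_out e0 faE gaE).
have [d fa_semi] := monomial_semilinear q fa_mono.
by apply: equiv_linear_of_semilinear; exists d => x v; rewrite -!faE fa_semi.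
Qed.

End ThreeProjections.

Lemma exists_inj_outside3 m a b c : dist3 a b c -> (m <= n - 3)%N ->
  exists e : 'I_m -> 'I_n, injective e /\ forall j : 'I_m, notin3 (e j) a b c.
Proof.
move=> /and3P [ab ac bc] mn; pose K := [set t | notin3 t a b c].
have card_K : #|K| = (n - 3)%N.
  have -> : K = ~: [set a; b; c].
    by apply/setP => t; rewrite !inE /notin3 !negb_or andbA.
  have := cardsC [set a; b; c]; rewrite card_ord -setUA cardsU1 cards2 bc !inE negb_or ab ac /=.
  lia.
have mK : (m <= #|K|)%N by rewrite card_K.
exists (fun j : 'I_m => enum_val (widen_ord mK j)); split.
  by move=> j j' /enum_val_inj/(congr1 val) /= eq_jj'; apply: val_inj.
by move=> j; have := enum_valP (widen_ord mK j); rewrite inE.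
Qed.

Lemma equiv_linear_of_three_projections h m a b c :
  (forall T, Fq_linear q T -> exists fa : 'I_h -> L, linpoly q fa =1 T) ->
  (forall fa ga : 'I_h -> L, lp_invertible q fa -> lp_invertible q ga ->
     Prop_m q m fa ga -> lp_monomial fa /\ lp_monomial ga) ->
  (0 < m)%N -> (3 + m <= n)%N -> dist3 a b c ->
  equiv_to_linear q (proj C a) -> equiv_to_linear q (proj C b) ->
  equiv_to_linear q (proj C c) -> equiv_to_linear q C.
Proof.
move=> lp_surj Prop_m_mono m_gt0 mn abc /proj_linearizer_of_equiv [Tha Tha_lin]
  /proj_linearizer_of_equiv [Thb Thb_lin] /proj_linearizer_of_equiv [Thc Thc_lin].
have [|e [e_inj e_out]] := @exists_inj_outside3 m _ _ _ abc; first by lia.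
have e0 (j : 'I_m) : val j = 0%N -> e j = e (Ordinal m_gt0) by move=> j0; congr e; apply: val_inj.
exact: (equiv_linear_of_Prop_m abc (e_out _) Tha_lin Thb_lin Thc_lin lp_surj Prop_m_mono
  e_inj e_out e0).
Qed.

End ThreeCoordinateCodes.

Theorem lemma5p10 (L : finFieldType) (q h m : nat) :
  (exists p k : nat, [/\ prime p, (0 < k)%N & q = (p ^ k)%N]) ->
  (0 < h)%N -> (0 < m)%N -> #|L| = (q ^ h)%N ->
  (forall f g : 'I_h -> L,
      lp_invertible q f -> lp_invertible q g -> Prop_m q m f g ->
      lp_monomial f /\ lp_monomial g) ->
  forall (n : nat) (C : {set 'rV[L]_n}),
    (3 + m <= n)%N ->
    Fq_code q C -> #|C| = (q ^ (3 * h))%N -> min_dist C (n - 2) ->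
    (exists i1 i2 i3 : 'I_n,
        [/\ i1 != i2, i1 != i3, i2 != i3 &
            [/\ equiv_to_linear q (proj C i1), equiv_to_linear q (proj C i2)
              & equiv_to_linear q (proj C i3)]]) ->
    equiv_to_linear q C.
Proof.
move=> [p [k [p_prime k_gt0 ->]]] h_gt0 m_gt0 card_L Prop_m_mono n C mn [C0 CD CZ]
  card_C [_ C_dist] [a [b [c [ab ac bc [Pa Pb Pc]]]]].
have card_C3 : #|C| = (#|L| ^ 3)%N by rewrite card_C card_L -[in RHS]expnM mulnC.
have abc : dist3 a b c by rewrite /dist3 ab ac bc.
exact: (equiv_linear_of_three_projections C0 CD CZ (inFq_opp1 p_prime card_L) C_dist card_C3
  (linpoly_surj p_prime k_gt0 h_gt0 card_L) Prop_m_mono m_gt0 mn abc Pa Pb Pc).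
Qed.
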